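(* Let $n>2$, let $f:[0,\infty)\to Cl_{n-1}$ be an $L^1$ function and let $\psi\in V(n-1)$. Then $$F(x,y)=\int_0^{\frac{\|x-y\|}{\|x-\hat y\|}}f(r)\,dr$$ is a well-defined function on $\mathbb{R}^{n,+}\times\mathbb{R}^{n,+}$, and $F(\psi(x),\psi(y))=F(x,y)$ for all $x,y\in\mathbb{R}^{n,+}$.
   Context: $Cl_n$ is the real Clifford algebra generated by an orthonormal basis $e_1,\dots,e_n$ of $\mathbb{R}^n$ with $e_ie_j+e_je_i=-2\delta_{ij}$, and $Cl_{n-1}$ the subalgebra generated by $e_1,\dots,e_{n-1}$; vectors $x=\sum x_je_j$ of $\mathbb{R}^n$ are viewed in $Cl_n$, $\|\cdot\|$ is the Euclidean norm, and $\mathbb{R}^{n,+}=\{x:x_n>0\}$. For $y=\sum y_je_j$, $\hat y=y_1e_1+\dots+y_{n-1}e_{n-1}-y_ne_n$. The reversion $\sim$ is the anti-automorphism of $Cl_n$ with $\widetilde{e_{j_1}\cdots e_{j_r}}=e_{j_r}\cdots e_{j_1}$. $V(n-1)$ denotes the (Vahlen) group of Möbius transformations of $\mathbb{R}^n\cup\{\infty\}$ of the form $\psi(x)=(ax+b)(cx+d)^{-1}$ with $a,b,c,d\in Cl_{n-1}$ each a product of vectors of $\mathbb{R}^{n-1}$ (or zero), $\tilde a c,\tilde c d,\tilde d b,\tilde b a\in\mathbb{R}^{n-1}$ and $\tilde a d-\tilde b c=\pm1$ (the extensions to $\mathbb{R}^n\cup\{\infty\}$ of Möbius transformations of $\mathbb{R}^{n-1}\cup\{\infty\}$);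 each such $\psi$ maps $\mathbb{R}^{n,+}$ onto itself. *)

From HB Require Import structures.
From mathcomp Require Import all_boot all_order all_algebra.
From mathcomp Require Import all_classical all_reals all_analysis.
Set Implicit Arguments. Unset Strict Implicit. Unset Printing Implicit Defensive.
Import Order.TTheory GRing.Theory Num.Theory.
Local Open Scope ring_scope.

Section Clifford.
Variables (R : realType) (n : nat).

(* The real Clifford algebra Cl_n: elements are coefficient functions on the
   basis blades e_A = e_{i1} ... e_{ik} (i1 < ... < ik), A a subset of 'I_n.
   Index i : 'I_n stands for e_{i+1}; so e_n is the index with value n.-1. *)
Definition Cl := {set 'I_n} -> R.

(* e_A e_B = cl_sign A B e_{A Δ B}, with e_i e_j + e_j e_i = -2 delta_ij *)
Definition cl_sign (A B : {set 'I_n}) : R :=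
  (-1) ^+ (#|finset.finset (fun p : 'I_n * 'I_n => (p.1 \in A) && (p.2 \in B) && (p.2 < p.1)%N)|
            + #|A :&: B|)%N.

Definition symd (A B : {set 'I_n}) : {set 'I_n} := (A :\: B) :|: (B :\: A).

Definition cladd (u v : Cl) : Cl := fun A => u A + v A.
Definition clopp (u : Cl) : Cl := fun A => - u A.
Definition clsub (u v : Cl) : Cl := fun A => u A - v A.
Definition clzero : Cl := fun _ => 0.
Definition clone : Cl := fun A => (A == finset.set0)%:R.
Definition clmul (u v : Cl) : Cl :=
  fun C => \sum_(A : {set 'I_n}) cl_sign A (symd A C) * u A * v (symd A C).

(* multiplicative inverse in Cl_n (when it exists; 0 otherwise) *)
Definition clinv (u : Cl) : Cl :=
  match pselect (exists v : Cl, clmul u v = clone /\ clmul v u = clone) with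
  | left h => projT1 (cid h)
  | right _ => clzero
  end.

(* reversion: e_{j1}...e_{jr} |-> e_{jr}...e_{j1} *)
Definition clrev (u : Cl) : Cl := fun A => (-1) ^+ 'C(#|A|, 2) * u A.

Definition clvec (x : 'I_n -> R) : Cl :=
  fun A => \sum_(i : 'I_n) (A == finset.set1 i)%:R * x i.

(* Euclidean norm (of the coefficient vector; on vectors it is ||x||) *)
Definition clnorm (u : Cl) : R := Num.sqrt (\sum_(A : {set 'I_n}) u A ^+ 2).

(* hat: e_n |-> -e_n (for a vector y this is y_1e_1+...+y_{n-1}e_{n-1}-y_ne_n) *)
Definition clhat (u : Cl) : Cl :=
  fun A => (if [exists i in A, nat_of_ord i == n.-1] then -1 else 1) * u A.

Definition in_uhs (x : 'I_n -> R) : Prop :=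
  forall i : 'I_n, nat_of_ord i = n.-1 -> 0 < x i.

Definition sub_vector (x : 'I_n -> R) : Prop :=
  forall i : 'I_n, nat_of_ord i = n.-1 -> x i = 0.

Definition in_Cl_sub (u : Cl) : Prop :=
  forall (A : {set 'I_n}) (i : 'I_n), i \in A -> nat_of_ord i = n.-1 -> u A = 0.

Definition is_sub_vec (u : Cl) : Prop :=
  exists x : 'I_n -> R, sub_vector x /\ u = clvec x.

Definition is_vprod (u : Cl) : Prop :=
  exists s : seq ('I_n -> R), (forall i : nat, (i < size s)%N -> sub_vector (nth (fun _ => 0) s i)) /\
    u = foldr (fun x acc => clmul (clvec x) acc) clone s.

Definition vahlen (a b c d : Cl) : Prop :=
  [/\ (is_vprod a \/ a = clzero), (is_vprod b \/ b = clzero),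
      (is_vprod c \/ c = clzero), (is_vprod d \/ d = clzero) &
  [/\ is_sub_vec (clmul (clrev a) c), is_sub_vec (clmul (clrev c) d),
      is_sub_vec (clmul (clrev d) b), is_sub_vec (clmul (clrev b) a) &
      (clsub (clmul (clrev a) d) (clmul (clrev b) c) = clone \/
       clsub (clmul (clrev a) d) (clmul (clrev b) c) = clopp clone)]].

Definition mobius (a b c d : Cl) (x : 'I_n -> R) : Cl :=
  clmul (cladd (clmul a (clvec x)) b) (clinv (cladd (clmul c (clvec x)) d)).

Definition hratio (u v : Cl) : R := clnorm (clsub u v) / clnorm (clsub u (clhat v)).

Definition Fint (f : R -> Cl) (u v : Cl) : Cl :=
  fun A => Rintegral (@lebesgue_measure R) `[0, hratio u v]%classic (fun r => f r A).

End Clifford.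

(* The entries of a Vahlen matrix are products of vectors of R^(n-1) (or 0).
   Such elements are fixed by the reflection hat, they satisfy
   u * cl_conj u = |u|^2, so the norm is multiplicative on them and
   u^-1 = cl_conj u / |u|^2.  If c = 0, psi(x) = (a x + b) d^-1 is a similarity.
   If c <> 0, the Vahlen conditions give a = k c v, d = k c w and
   b = k c (k w v - eps) with v, w in R^(n-1) and k real, hence
   psi(x) = k c (v + M (x + k w)^-1) c^-1 with M = k (w v - v w) - eps.
   In both cases psi commutes with hat and
   |psi x - psi y|^2 = K rho(x) rho(y) |x - y|^2 with rho(hat x) = rho(x)
   (rho = 1, resp. rho(x) = |x + k w|^-2, as w has no e_n component), so these
   factors cancel in |psi x - psi y| / |psi x - hat (psi y)|. *)

From HB Require Import structures.
From mathcomp Require Import all_boot all_order all_algebra.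
From mathcomp Require Import all_classical all_reals all_analysis.
From mathcomp Require Import ring.
Import Order.TTheory GRing.Theory Num.Theory.
Local Open Scope ring_scope.
Set Implicit Arguments. Unset Strict Implicit. Unset Printing Implicit Defensive.

(* The classical-sets [set0] would otherwise shadow the finite-set one. *)
Local Notation set0 := finset.set0.

Lemma sqrt_mul_ratio (R : rcfType) (c x y : R) : 0 < c ->
  Num.sqrt (c * x) / Num.sqrt (c * y) = Num.sqrt x / Num.sqrt y.
Proof.
move=> c_gt0; have sc_neq0 : Num.sqrt c != 0 by rewrite sqrtr_eq0 -ltNge.
by rewrite !sqrtrM ?ltW // invfM mulrACA divff // mul1r.
Qed.

Section BladeSigns.
Variables (R : realType) (n : nat).
Implicit Types A B C : {set 'I_n}.

(* A product form of [cl_sign], multiplicative in each argument w.r.t. [symd]. *)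
Definition blade_sign A B : R := \prod_(i : 'I_n) \prod_(j : 'I_n)
  (if (i \in A) && (j \in B) && (j <= i)%N then -1 else 1).

Lemma in_symd (x : 'I_n) A B : (x \in symd A B) = (x \in A) (+) (x \in B).
Proof. by rewrite /symd !inE; case: (x \in A); case: (x \in B). Qed.

Lemma symdC A B : symd A B = symd B A.
Proof. by apply/setP => x; rewrite !in_symd addbC. Qed.

Lemma symdA A B C : symd A (symd B C) = symd (symd A B) C.
Proof. by apply/setP => x; rewrite !in_symd addbA. Qed.

Lemma symdK A B : symd A (symd A B) = B.
Proof. by apply/setP => x; rewrite !in_symd addbA addbb. Qed.

Lemma symdv A : symd A A = set0.
Proof. by apply/setP => x; rewrite !in_symd addbb inE. Qed.

Lemma symd0 A : symd A set0 = A.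
Proof. by apply/setP => x; rewrite !in_symd inE addbF. Qed.

Lemma sym0d A : symd set0 A = A.
Proof. by rewrite symdC symd0. Qed.

Lemma symd_inj A : injective (symd A).
Proof. by move=> B B' eqAB; rewrite -(symdK A B) eqAB symdK. Qed.

Lemma symd_eq0 A B : (symd A B == set0) = (A == B).
Proof.
apply/eqP/eqP => [AB0|->]; last exact: symdv.
by rewrite -(symdK A B) AB0 symd0.
Qed.

Lemma blade_signDl A A' B : blade_sign (symd A A') B = blade_sign A B * blade_sign A' B.
Proof.
rewrite /blade_sign -big_split; apply: eq_bigr => i _; rewrite -big_split.
apply: eq_bigr => j _; rewrite in_symd.
by case: (i \in A); case: (i \in A'); case: (j \in B); case: (j <= i)%N;
  rewrite /= ?mulr1 ?mul1r ?mulrNN ?mulr1.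
Qed.

Lemma blade_signDr A B B' : blade_sign A (symd B B') = blade_sign A B * blade_sign A B'.
Proof.
rewrite /blade_sign -big_split; apply: eq_bigr => i _; rewrite -big_split.
apply: eq_bigr => j _; rewrite in_symd.
by case: (i \in A); case: (j \in B); case: (j \in B'); case: (j <= i)%N;
  rewrite /= ?mulr1 ?mul1r ?mulrNN ?mulr1.
Qed.

Lemma blade_sign_sqr A B : blade_sign A B * blade_sign A B = 1.
Proof.
rewrite /blade_sign -big_split big1 // => i _; rewrite -big_split big1 // => j _.
by rewrite /=; case: ifP => _; rewrite ?mulrNN mulr1.
Qed.

Lemma blade_sign0l B : blade_sign set0 B = 1.
Proof. by rewrite /blade_sign big1 // => i _; rewrite big1 // => j _; rewrite inE. Qed.

Lemma blade_sign0r A : blade_sign A set0 = 1.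
Proof. by rewrite /blade_sign big1 // => i _; rewrite big1 // => j _; rewrite inE andbF. Qed.

Lemma blade_sign1 (i j : 'I_n) :
  blade_sign [set i] [set j] = if (j <= i)%N then -1 else 1.
Proof.
rewrite /blade_sign (bigD1 i) //= (bigD1 j) //= !inE !eqxx /= big1 ?mulr1.
  rewrite big1 ?mulr1 // => k /negbTE nki; rewrite big1 // => l _.
  by rewrite inE nki.
by move=> l /negbTE nlj; rewrite inE nlj.
Qed.

Lemma cl_signE A B : cl_sign R A B = blade_sign A B.
Proof.
rewrite /cl_sign exprD.
have -> : #|finset (fun p : 'I_n * 'I_n => (p.1 \in A) && (p.2 \in B) && (p.2 < p.1)%N)|
   = (\sum_i \sum_j ((i \in A) && (j \in B) && (j < i)%N : nat))%N.
  rewrite cardsE -sum1_card big_mkcond /= (pair_bigA _ (fun i j =>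
     ((i \in A) && (j \in B) && (j < i)%N : nat))) /=.
  by apply: eq_bigr => p _; rewrite unfold_in; case: ifP.
have -> : #|A :&: B| = (\sum_i \sum_j ((i \in A) && (j \in B) && (j == i) : nat))%N.
  rewrite -sum1_card big_mkcond /=; apply: eq_bigr => i _.
  rewrite (bigD1 i) //= eqxx big1 ?addn0 => [|j /negbTE ->]; last by rewrite andbF.
  by rewrite inE andbT; case: ifP.
rewrite !expr_sum -big_split /=; apply: eq_bigr => i _.
rewrite !expr_sum -big_split /=; apply: eq_bigr => j _.
case: (i \in A); case: (j \in B); rewrite /= ?mulr1 //.
case: ltngtP => [ji|ij|/val_inj ->]; rewrite /= ?expr1 ?expr0 ?mulr1 ?mul1r.
- by rewrite -val_eqE /= ltn_eqF // mulr1.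
- by rewrite -val_eqE /= gtn_eqF.
- by rewrite eqxx.
Qed.

Definition parity A : R := (-1) ^+ #|A|.

Lemma parityE A : parity A = \prod_(i : 'I_n) (if i \in A then -1 else 1).
Proof.
rewrite /parity -sum1_card expr_sum big_mkcond /=; apply: eq_bigr => i _.
by case: ifP; rewrite ?expr1 ?expr0.
Qed.

Lemma parityD A B : parity (symd A B) = parity A * parity B.
Proof.
rewrite !parityE -big_split; apply: eq_bigr => i _; rewrite in_symd.
by case: (i \in A); case: (i \in B); rewrite /= ?mulr1 ?mul1r ?mulrNN ?mulr1.
Qed.

(* The pairs with j <= i and those with i <= j together count A * A and,
   once more, its diagonal. *)
Lemma card_blade_pairs A :
  (\sum_(i : 'I_n) \sum_(j : 'I_n) ((i \in A) && (j \in A) && (j <= i)%N : nat))%N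
  = 'C(#|A|.+1, 2).
Proof.
set s := (\sum_i _)%N.
have sym : s =
    (\sum_(i : 'I_n) \sum_(j : 'I_n) ((i \in A) && (j \in A) && (i <= j)%N : nat))%N.
  rewrite /s exchange_big /=; apply: eq_bigr => i _; apply: eq_bigr => j _.
  by rewrite [(j \in A) && _]andbC.
have all_pairs :
    (#|A| * #|A| = \sum_(i : 'I_n) \sum_(j : 'I_n) ((i \in A) && (j \in A) : nat))%N.
  rewrite -sum1_card big_distrl /= big_mkcond /=; apply: eq_bigr => i _.
  rewrite big_mkcond /= mul1n; case: (i \in A) => //=.
  by rewrite big1.
have diag :
    (#|A| = \sum_(i : 'I_n) \sum_(j : 'I_n) ((i \in A) && (j \in A) && (i == j) : nat))%N.
  rewrite -sum1_card big_mkcond /=; apply: eq_bigr => i _.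
  rewrite (bigD1 i) //= eqxx andbT big1 ?addn0; first by case: (i \in A).
  by move=> j /negbTE; rewrite eq_sym => ->; rewrite andbF.
suff e : (s * 2 = #|A| * #|A| + #|A|)%N.
  by rewrite bin2 /= mulSn addnC -e muln2 doubleK.
rewrite muln2 -addnn {1}sym /s all_pairs {1}diag -!big_split /=.
apply: eq_bigr => i _; rewrite -!big_split /=; apply: eq_bigr => j _.
case: (i \in A); case: (j \in A) => //=.
case: ltngtP => [ij|ji|/val_inj ->]; rewrite ?eqxx //.
- by rewrite -val_eqE /= ltn_eqF.
- by rewrite -val_eqE /= gtn_eqF.
Qed.

Definition rev_sign A : R := (-1) ^+ 'C(#|A|, 2).

Lemma blade_sign_diag A : blade_sign A A = (-1) ^+ 'C(#|A|.+1, 2).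
Proof.
rewrite -card_blade_pairs /blade_sign expr_sum; apply: eq_bigr => i _.
by rewrite expr_sum; apply: eq_bigr => j _; case: ifP; rewrite ?expr1 ?expr0.
Qed.

Lemma rev_signE A : rev_sign A = blade_sign A A * parity A.
Proof.
by rewrite blade_sign_diag binS bin1 exprD /parity -mulrA -expr2 sqrr_sign mulr1.
Qed.

Lemma rev_signD A B :
  rev_sign (symd A B) * blade_sign A B = rev_sign A * rev_sign B * blade_sign B A.
Proof.
rewrite !rev_signE parityD blade_signDl !blade_signDr.
transitivity (blade_sign A A * parity A * (blade_sign B B * parity B) * blade_sign B A *
  (blade_sign A B * blade_sign A B)); first ring.
by rewrite blade_sign_sqr mulr1.
Qed.

Definition conj_sign A : R := blade_sign A A.

Lemma conj_signD A B :
  conj_sign (symd A B) * blade_sign A B = conj_sign A * conj_sign B * blade_sign B A.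
Proof.
rewrite /conj_sign blade_signDl !blade_signDr.
transitivity (blade_sign A A * blade_sign B B * blade_sign B A *
  (blade_sign A B * blade_sign A B)); first ring.
by rewrite blade_sign_sqr mulr1.
Qed.

Lemma conj_sign_sqr A : conj_sign A * conj_sign A = 1.
Proof. exact: blade_sign_sqr. Qed.

Lemma conj_sign0 : conj_sign set0 = 1.
Proof. exact: blade_sign0l. Qed.

Lemma rev_sign_sqr A : rev_sign A * rev_sign A = 1.
Proof. by rewrite -expr2 sqrr_sign. Qed.

Lemma rev_sign0 : rev_sign set0 = 1.
Proof. by rewrite /rev_sign cards0. Qed.

Definition hat_sign A : R := if [exists i in A, nat_of_ord i == n.-1] then -1 else 1.

Lemma hat_signE A :
  hat_sign A = \prod_(i : 'I_n) (if (i \in A) && (nat_of_ord i == n.-1) then -1 else 1).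
Proof.
rewrite /hat_sign; case: existsP => [[i0 /andP [Ai0 i0_last]]|no_last].
  rewrite (bigD1 i0) //= Ai0 i0_last /= big1 ?mulr1 // => i ne_i_i0.
  case: ifP => // /andP [_ i_last]; case/negP: ne_i_i0.
  by apply/eqP/val_inj; rewrite /= (eqP i_last) (eqP i0_last).
rewrite big1 // => i _; case: ifP => // /andP [Ai i_last]; case: no_last.
by exists i; rewrite Ai i_last.
Qed.

Lemma hat_signD A B : hat_sign (symd A B) = hat_sign A * hat_sign B.
Proof.
rewrite !hat_signE -big_split; apply: eq_bigr => i _; rewrite in_symd.
by case: (i \in A); case: (i \in B); case: (_ == _); rewrite /= ?mulr1 ?mul1r ?mulrNN ?mulr1.
Qed.

Lemma hat_sign_sqr A : hat_sign A * hat_sign A = 1.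
Proof. by rewrite /hat_sign; case: ifP; rewrite ?mulrNN mulr1. Qed.

Lemma hat_sign0 : hat_sign set0 = 1.
Proof. by rewrite hat_signE big1 // => i _; rewrite inE. Qed.

End BladeSigns.

(* A copy of [Cl R n] carrying the Clifford product: as a function type,
   [Cl R n] itself has the pointwise ring structure. *)
Definition clifford (R : realType) n := Cl R n.
HB.instance Definition _ (R : realType) n := GRing.Lmodule.on (clifford R n).

Section CliffordRing.
Variables (R : realType) (n : nat).
Local Notation clifford := (clifford R n).
Implicit Types (A B C : {set 'I_n}) (u v w : clifford).

Lemma cl_addE u v C : (u + v) C = u C + v C. Proof. by []. Qed.
Lemma cl_oppE u C : (- u) C = - u C. Proof. by []. Qed.
Lemma cl_subE u v C : (u - v) C = u C - v C. Proof. by []. Qed.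
Lemma cl_scaleE (k : R) u C : (k *: u) C = k * u C. Proof. by []. Qed.

Lemma clmulE u v C :
  clmul u v C = \sum_A blade_sign R A (symd A C) * u A * v (symd A C).
Proof. by apply: eq_bigr => A _; rewrite cl_signE. Qed.

Lemma clmulA : associative (@clmul R n : clifford -> clifford -> clifford).
Proof.
move=> u v w; symmetry; apply/funext => C; rewrite !clmulE.
under eq_bigr => B _ do rewrite clmulE mulr_sumr mulr_suml.
rewrite exchange_big /=; apply: eq_bigr => A _.
rewrite clmulE mulr_sumr (reindex_inj (@symd_inj n A)) /=.
apply: eq_bigr => B _; rewrite symdK.
have -> : symd (symd A B) C = symd B (symd A C) by rewrite symdA (symdC B A).
rewrite !blade_signDl !blade_signDr.
transitivity (blade_sign R A A * blade_sign R A C * u A * (blade_sign R B B *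
  blade_sign R B A * blade_sign R B C * v B * w (symd B (symd A C))) *
  (blade_sign R A B * blade_sign R A B)); first ring.
by rewrite blade_sign_sqr mulr1; ring.
Qed.

Lemma clmul1l : left_id (@clone R n : clifford) (@clmul R n).
Proof.
move=> u; apply/funext => C; rewrite clmulE (bigD1 set0) //= big1 ?addr0.
  by rewrite blade_sign0l /clone eqxx sym0d !mul1r.
by move=> A /negbTE A_neq0; rewrite /clone A_neq0 mulr0 mul0r.
Qed.

Lemma clmul1r : right_id (@clone R n : clifford) (@clmul R n).
Proof.
move=> u; apply/funext => C; rewrite clmulE (bigD1 C) //= big1 ?addr0.
  by rewrite symdv blade_sign0r /clone eqxx mul1r mulr1.
by move=> A /negbTE neq_AC; rewrite /clone symd_eq0 neq_AC mulr0.
Qed.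

Lemma clmulDl : left_distributive (@clmul R n : clifford -> clifford -> clifford) +%R.
Proof.
move=> u v w; apply/funext => C; rewrite cl_addE !clmulE -big_split /=.
by apply: eq_bigr => A _; rewrite cl_addE mulrDr mulrDl.
Qed.

Lemma clmulDr : right_distributive (@clmul R n : clifford -> clifford -> clifford) +%R.
Proof.
move=> u v w; apply/funext => C; rewrite cl_addE !clmulE -big_split /=.
by apply: eq_bigr => A _; rewrite cl_addE mulrDr.
Qed.

Lemma clone_neq0 : (@clone R n : clifford) != 0.
Proof.
apply/eqP => /(congr1 (fun u : clifford => u set0)); rewrite /clone eqxx /=.
by move/eqP; rewrite oner_eq0.
Qed.

Lemma clmul_scalel (k : R) u v : k *: clmul u v = clmul (k *: u) v.
Proof.
apply/funext => C; rewrite cl_scaleE !clmulE mulr_sumr.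
by apply: eq_bigr => A _; rewrite !cl_scaleE; ring.
Qed.

Lemma clmul_scaler (k : R) u v : k *: clmul u v = clmul u (k *: v).
Proof.
apply/funext => C; rewrite cl_scaleE !clmulE mulr_sumr.
by apply: eq_bigr => A _; rewrite !cl_scaleE; ring.
Qed.

End CliffordRing.

HB.instance Definition _ (R : realType) n := GRing.Zmodule_isNzRing.Build (clifford R n)
  (@clmulA R n) (@clmul1l R n) (@clmul1r R n) (@clmulDl R n) (@clmulDr R n)
  (@clone_neq0 R n).
HB.instance Definition _ (R : realType) n :=
  GRing.Lmodule_isLalgebra.Build R (clifford R n) (@clmul_scalel R n).
HB.instance Definition _ (R : realType) n :=
  GRing.Lalgebra_isAlgebra.Build R (clifford R n) (@clmul_scaler R n).

Section CliffordCoefficients.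
Variables (R : realType) (n : nat).
Local Notation clifford := (clifford R n).
Implicit Types (A B C : {set 'I_n}) (u v w : clifford).

Lemma cl_mulE u v C :
  (u * v) C = \sum_A blade_sign R A (symd A C) * u A * v (symd A C).
Proof. exact: clmulE. Qed.

Lemma cl_algE (k : R) C : (k%:A : clifford) C = k * (C == set0)%:R.
Proof. by []. Qed.

Lemma cl_alg_eq0 (k : R) : (k%:A == 0 :> clifford) = (k == 0).
Proof.
apply/eqP/eqP => [/(congr1 (fun u : clifford => u set0))|->]; last exact: scale0r.
by rewrite cl_algE eqxx mulr1.
Qed.

End CliffordCoefficients.

Definition cl_diag (R : realType) n (h : {set 'I_n} -> R) (u : clifford R n) :
  clifford R n := fun A => h A * u A.

Lemma cl_diag_is_linear (R : realType) n (h : {set 'I_n} -> R) : linear (cl_diag h).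
Proof.
by move=> k u v; apply/funext => A; rewrite /cl_diag /= !cl_addE !cl_scaleE mulrDr mulrCA.
Qed.

HB.instance Definition _ (R : realType) n (h : {set 'I_n} -> R) :=
  GRing.isLinear.Build R (clifford R n) (clifford R n) *:%R (cl_diag h)
    (cl_diag_is_linear h).

Notation cl_rev := (cl_diag (@rev_sign _ _)).
Notation cl_conj := (cl_diag (@conj_sign _ _)).
Notation cl_hat := (cl_diag (@hat_sign _ _)).

Section Involutions.
Variables (R : realType) (n : nat).
Local Notation clifford := (clifford R n).
Implicit Types (A B C : {set 'I_n}) (u v w : clifford) (h : {set 'I_n} -> R).

Lemma cl_diagM_anti h :
  (forall A B, h (symd A B) * blade_sign R A B = h A * h B * blade_sign R B A) ->
  {morph cl_diag h : u v / u * v >-> v * u}.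
Proof.
move=> hD u v; apply/funext => C; rewrite /cl_diag !cl_mulE mulr_sumr.
rewrite (reindex_inj (@symd_inj n C)) /=; apply: eq_bigr => A _.
have -> : symd (symd C A) C = A by rewrite symdC symdA symdv sym0d.
have := hD (symd A C) A; rewrite symdC symdK (symdC C A) => hDA.
transitivity ((h C * blade_sign R (symd A C) A) * u (symd A C) * v A); first ring.
by rewrite hDA; ring.
Qed.

Lemma cl_diagM h : (forall A B, h (symd A B) = h A * h B) ->
  {morph cl_diag h : u v / u * v}.
Proof.
move=> hD u v; apply/funext => C; rewrite /cl_diag !cl_mulE mulr_sumr.
by apply: eq_bigr => A _; rewrite -{1}(symdK A C) hD; ring.
Qed.

Lemma cl_diag_alg h (k : R) : h set0 = 1 -> cl_diag h k%:A = k%:A.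
Proof.
move=> h0; apply/funext => C; rewrite /cl_diag !cl_algE.
by case: eqP => [->|_]; rewrite ?h0 ?mul1r ?mulr0.
Qed.

Lemma cl_diag1 h : h set0 = 1 -> cl_diag h 1 = 1.
Proof. by move=> h0; rewrite -[1]scale1r cl_diag_alg. Qed.

Lemma cl_diagK h : (forall A, h A * h A = 1) -> involutive (cl_diag h).
Proof. by move=> hK u; apply/funext => C; rewrite /cl_diag mulrA hK mul1r. Qed.

Lemma cl_diagC h1 h2 u : cl_diag h1 (cl_diag h2 u) = cl_diag h2 (cl_diag h1 u).
Proof. by apply/funext => A; rewrite /cl_diag mulrCA. Qed.

Lemma cl_revM : {morph cl_rev : u v / u * v >-> v * u :> clifford}.
Proof. exact/cl_diagM_anti/rev_signD. Qed.

Lemma cl_conjM : {morph cl_conj : u v / u * v >-> v * u :> clifford}.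
Proof. exact/cl_diagM_anti/conj_signD. Qed.

Lemma cl_hatM : {morph cl_hat : u v / u * v :> clifford}.
Proof. exact/cl_diagM/hat_signD. Qed.

Lemma cl_revK : involutive (cl_rev : clifford -> clifford).
Proof. exact/cl_diagK/rev_sign_sqr. Qed.

End Involutions.

Definition vec (R : realType) n (x : 'I_n -> R) : clifford R n := clvec x.

Lemma vec_is_linear (R : realType) n : linear (@vec R n).
Proof.
move=> k x y; apply/funext => A; rewrite cl_addE cl_scaleE /vec /clvec mulr_sumr.
rewrite -big_split; apply: eq_bigr => i _.
by rewrite !fctE mulrDr mulrCA.
Qed.

HB.instance Definition _ (R : realType) n :=
  GRing.isLinear.Build R ('I_n -> R) (clifford R n) *:%R (@vec R n) (@vec_is_linear R n).

Section Vectors.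
Variables (R : realType) (n : nat).
Local Notation clifford := (clifford R n).
Implicit Types (A B C : {set 'I_n}) (u v : clifford) (x y : 'I_n -> R).

Definition blade A : clifford := fun C => (C == A)%:R.

Lemma blade0 : blade set0 = 1.
Proof. by []. Qed.

Lemma bladeM A B : blade A * blade B = blade_sign R A B *: blade (symd A B).
Proof.
apply/funext => C; rewrite cl_mulE (bigD1 A) //= big1 ?addr0; last first.
  by move=> D /negbTE neq_DA; rewrite /blade neq_DA mulr0 mul0r.
rewrite /blade eqxx mulr1 cl_scaleE.
have [->|neq_C] := eqVneq C (symd A B); first by rewrite symdK !eqxx.
suff -> : (symd A C == B) = false by rewrite !mulr0.
by apply: contraNF neq_C => /eqP <-; rewrite symdK.
Qed.

Lemma cl_diag_blade (h : {set 'I_n} -> R) A : cl_diag h (blade A) = h A *: blade A.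
Proof.
apply/funext => C; rewrite cl_scaleE /cl_diag /blade.
by case: eqP => [->|_]; rewrite ?mulr0.
Qed.

Lemma vecE x : vec x = \sum_i x i *: blade [set i].
Proof.
apply/funext => A; rewrite /vec /clvec.
elim/big_rec2: _ => [|i a u _ ->]; first by [].
by rewrite cl_addE cl_scaleE /blade mulrC.
Qed.

Lemma vec_blade1E x (i : 'I_n) : vec x [set i] = x i.
Proof.
rewrite /vec /clvec (bigD1 i) //= eqxx mul1r big1 ?addr0 // => j neq_ji.
by rewrite (inj_eq set1_inj) eq_sym (negbTE neq_ji) mul0r.
Qed.

Lemma vecZ (k : R) x : vec (k *: x) = k *: vec x.
Proof. exact: linearZ. Qed.

Lemma vec_neq0 x (i : 'I_n) : x i != 0 -> vec x != 0.
Proof. by apply: contraNneq => x0; rewrite -vec_blade1E x0. Qed.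

Lemma cl_diag_vec (h : {set 'I_n} -> R) (k : R) x :
  (forall i, h [set i] = k) -> cl_diag h (vec x) = k *: vec x.
Proof.
move=> hk; rewrite vecE linear_sum scaler_sumr; apply: eq_bigr => i _.
by rewrite linearZ /= cl_diag_blade hk scalerA mulrC -scalerA.
Qed.

Lemma cl_rev_vec x : cl_rev (vec x) = vec x.
Proof. by rewrite (@cl_diag_vec _ 1) ?scale1r // => i; rewrite /rev_sign cards1. Qed.

Lemma cl_conj_vec x : cl_conj (vec x) = - vec x.
Proof.
by rewrite (@cl_diag_vec _ (-1)) ?scaleN1r // => i; rewrite /conj_sign blade_sign1 leqnn.
Qed.

Definition vdot x y : R := \sum_i x i * y i.

Lemma blade1_anticomm (i j : 'I_n) :
  blade [set i] * blade [set j] + blade [set j] * blade [set i] =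
  (if i == j then - 2 else 0)%:A.
Proof.
rewrite !bladeM [symd [set j] _]symdC -scalerDl !blade_sign1.
have [<-|neq_ij] := eqVneq i j.
  by rewrite symdv leqnn blade0; congr (_ *: _); ring.
case: ltngtP => [ij|ji|/val_inj eq_ij].
- by rewrite addNr !scale0r.
- by rewrite addrN !scale0r.
- by rewrite eq_ij eqxx in neq_ij.
Qed.

Lemma vec_anticomm x y : vec x * vec y + vec y * vec x = (- 2 * vdot x y)%:A.
Proof.
have expand z t : vec z * vec t =
    \sum_i \sum_j (z i * t j) *: (blade [set i] * blade [set j]).
  rewrite !vecE mulr_suml; apply: eq_bigr => i _; rewrite mulr_sumr.
  by apply: eq_bigr => j _; rewrite -scalerAl -scalerAr scalerA.
rewrite !expand [X in _ + X]exchange_big -big_split /= /vdot mulr_sumr scaler_suml.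
apply: eq_bigr => i _; rewrite -big_split /=.
under eq_bigr => j _ do rewrite [y j * x i]mulrC -scalerDr blade1_anticomm scalerA.
rewrite (bigD1 i) //= eqxx big1 ?addr0 => [|j neq_ji]; first by rewrite mulrC.
by rewrite eq_sym (negbTE neq_ji) mulr0 scale0r.
Qed.

Lemma vec_sqr x : vec x * vec x = (- vdot x x)%:A.
Proof.
have := vec_anticomm x x; rewrite -mulr2n -scaler_nat => /(congr1 ( *:%R 2^-1)).
rewrite !scalerA mulVf ?pnatr_eq0 // scale1r => ->; congr (_ *: _).
by rewrite mulrA mulrN mulVf ?pnatr_eq0 // mulN1r.
Qed.

Definition vhat x : 'I_n -> R := fun i => if nat_of_ord i == n.-1 then - x i else x i.

Lemma cl_hat_vec x : cl_hat (vec x) = vec (vhat x).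
Proof.
rewrite !vecE linear_sum; apply: eq_bigr => i _.
rewrite linearZ /= cl_diag_blade scalerA /vhat /hat_sign.
have -> : [exists j in [set i], nat_of_ord j == n.-1] = (nat_of_ord i == n.-1).
  apply/existsP/idP => [[j /andP [/set1P -> //]]|i_last].
  by exists i; rewrite inE eqxx.
by case: ifP; rewrite ?mulr1 ?mulrN1.
Qed.

Lemma vhat_sub x : sub_vector x -> vhat x = x.
Proof.
move=> x_sub; apply/funext => i; rewrite /vhat.
by case: eqP => // /(x_sub i) ->; rewrite oppr0.
Qed.

Lemma vhatD_sub x y : sub_vector y -> vhat (x + y) = vhat x + y.
Proof.
move=> y_sub; apply/funext => i; rewrite /vhat !fctE.
by case: eqP => // /(y_sub i) ->; rewrite !addr0.
Qed.

End Vectors.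

Section Norms.
Variables (R : realType) (n : nat).
Local Notation clifford := (clifford R n).
Implicit Types (A : {set 'I_n}) (u v : clifford) (h : {set 'I_n} -> R).

Definition cl_norm2 u : R := \sum_A u A ^+ 2.

Lemma cl_norm2_ge0 u : 0 <= cl_norm2 u.
Proof. by apply: sumr_ge0 => A _; rewrite sqr_ge0. Qed.

Lemma cl_norm2_eq0 u : (cl_norm2 u == 0) = (u == 0).
Proof.
apply/idP/eqP => [|->]; last by rewrite /cl_norm2 big1 // => A _; rewrite expr0n.
rewrite /cl_norm2 psumr_eq0 => [/allP u0|A _]; last by rewrite sqr_ge0.
apply/funext => A; apply/eqP; rewrite -sqrf_eq0.
by apply: u0; rewrite mem_index_enum.
Qed.

Lemma cl_norm2_gt0 u : u != 0 -> 0 < cl_norm2 u.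
Proof. by move=> u_neq0; rewrite lt_def cl_norm2_eq0 u_neq0 cl_norm2_ge0. Qed.

Lemma cl_norm2Z (k : R) u : cl_norm2 (k *: u) = k ^+ 2 * cl_norm2 u.
Proof. by rewrite /cl_norm2 mulr_sumr; apply: eq_bigr => A _; rewrite cl_scaleE exprMn. Qed.

Lemma cl_norm2N u : cl_norm2 (- u) = cl_norm2 u.
Proof. by rewrite -scaleN1r cl_norm2Z sqrrN expr1n mul1r. Qed.

Lemma cl_norm2_diag h u : (forall A, h A * h A = 1) -> cl_norm2 (cl_diag h u) = cl_norm2 u.
Proof.
by move=> hK; apply: eq_bigr => A _; rewrite /cl_diag exprMn expr2 hK mul1r.
Qed.

Lemma cl_scalarC u v : (u * v) set0 = (v * u) set0.
Proof. by rewrite !cl_mulE; apply: eq_bigr => A _; rewrite symd0; ring. Qed.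

Lemma cl_scalar_conj u : (u * cl_conj u) set0 = cl_norm2 u.
Proof.
rewrite cl_mulE; apply: eq_bigr => A _; rewrite symd0 /cl_diag -/(conj_sign R A).
transitivity (conj_sign R A * conj_sign R A * u A ^+ 2); first ring.
by rewrite conj_sign_sqr mul1r.
Qed.

Definition cl_normal u :=
  u * cl_conj u = (cl_norm2 u)%:A /\ cl_conj u * u = (cl_norm2 u)%:A.

Lemma cl_normalP u (mu : R) :
  u * cl_conj u = mu%:A -> cl_conj u * u = mu%:A -> cl_normal u.
Proof.
move=> u_conj conj_u; have mu_norm : mu = cl_norm2 u.
  by rewrite -cl_scalar_conj u_conj cl_algE eqxx mulr1.
by rewrite /cl_normal -mu_norm.
Qed.

Lemma cl_norm2Mr u v : cl_normal v -> cl_norm2 (u * v) = cl_norm2 u * cl_norm2 v.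
Proof.
move=> [v_conj _]; rewrite -[LHS]cl_scalar_conj cl_conjM mulrA -(mulrA u) v_conj.
by rewrite mulr_algr -scalerAl cl_scaleE cl_scalar_conj mulrC.
Qed.

Lemma cl_norm2Ml u v : cl_normal u -> cl_norm2 (u * v) = cl_norm2 u * cl_norm2 v.
Proof.
move=> [_ conj_u]; rewrite -[LHS]cl_scalar_conj cl_scalarC cl_conjM -mulrA.
rewrite (mulrA (cl_conj u)) conj_u mulr_algl -scalerAr cl_scaleE.
by rewrite cl_scalarC cl_scalar_conj.
Qed.

Lemma cl_normalM u v : cl_normal u -> cl_normal v -> cl_normal (u * v).
Proof.
move=> [u_conj conj_u] [v_conj conj_v]; apply: (cl_normalP (mu := cl_norm2 u * cl_norm2 v)).
  rewrite cl_conjM mulrA -(mulrA u) v_conj mulr_algr -scalerAl u_conj.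
  by rewrite scalerA mulrC.
rewrite cl_conjM -mulrA (mulrA (cl_conj u)) conj_u mulr_algl -scalerAr conj_v.
by rewrite scalerA.
Qed.

Lemma cl_normal_alg (k : R) : cl_normal k%:A.
Proof.
by apply: (cl_normalP (mu := k ^+ 2));
  rewrite cl_diag_alg ?conj_sign0 // mulr_algl scalerA -expr2.
Qed.

Lemma cl_normal_vec (x : 'I_n -> R) : cl_normal (vec x).
Proof.
apply: (cl_normalP (mu := vdot x x)).
  by rewrite cl_conj_vec mulrN vec_sqr scaleNr opprK.
by rewrite cl_conj_vec mulNr vec_sqr scaleNr opprK.
Qed.

Definition cl_ninv u : clifford := (cl_norm2 u)^-1 *: cl_conj u.

Lemma cl_mulrV_normal u : cl_normal u -> u != 0 -> u * cl_ninv u = 1.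
Proof.
move=> [u_conj _] u_neq0; rewrite -scalerAr u_conj scalerA mulVf ?scale1r //.
by rewrite cl_norm2_eq0.
Qed.

Lemma cl_mulVr_normal u : cl_normal u -> u != 0 -> cl_ninv u * u = 1.
Proof.
move=> [_ conj_u] u_neq0; rewrite -scalerAl conj_u scalerA mulVf ?scale1r //.
by rewrite cl_norm2_eq0.
Qed.

Lemma clinv_eq u v : u * v = 1 -> v * u = 1 -> clinv u = v.
Proof.
move=> uv vu; rewrite /clinv; case: pselect => [ex_inv|[]]; last by exists v.
case: (cid ex_inv) => v' [_ v'u] /=.
have -> : v' = (v' : clifford) * (u * v) by rewrite uv mulr1.
by rewrite mulrA [_ * u]v'u mul1r.
Qed.

Lemma clinv_normal u : cl_normal u -> u != 0 -> clinv u = cl_ninv u.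
Proof.
by move=> u_normal u_neq0; apply: clinv_eq; [exact: cl_mulrV_normal | exact: cl_mulVr_normal].
Qed.

Lemma cl_conj_ninv u : cl_conj (cl_ninv u) = (cl_norm2 u)^-1 *: u.
Proof. by rewrite linearZ /= cl_diagK //; exact: conj_sign_sqr. Qed.

Lemma cl_normal_ninv u : cl_normal u -> cl_normal (cl_ninv u).
Proof.
move=> [u_conj conj_u]; apply: (cl_normalP (mu := (cl_norm2 u)^-1 ^+ 2 * cl_norm2 u)).
  by rewrite cl_conj_ninv -scalerAr -scalerAl conj_u !scalerA -expr2.
by rewrite cl_conj_ninv -scalerAr -scalerAl u_conj !scalerA -expr2.
Qed.

Lemma cl_norm2_ninv u : cl_norm2 (cl_ninv u) = (cl_norm2 u)^-1.
Proof.
rewrite cl_norm2Z cl_norm2_diag; last exact: conj_sign_sqr.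
have [->|u_neq0] := eqVneq (cl_norm2 u) 0; first by rewrite invr0 mulr0.
by rewrite expr2 -mulrA mulVf ?mulr1.
Qed.

Lemma cl_hat_ninv u : cl_hat (cl_ninv u) = cl_ninv (cl_hat u).
Proof.
rewrite /cl_ninv linearZ /= cl_diagC cl_norm2_diag //; exact: hat_sign_sqr.
Qed.

End Norms.

Section VahlenEntries.
Variables (R : realType) (n : nat).
Local Notation clifford := (clifford R n).
Implicit Types (u g : clifford) (x y : 'I_n -> R) (s : seq ('I_n -> R)).

Definition vprod s : clifford := foldr (fun x p => vec x * p) 1 s.

Lemma cl_normal_vprod s : cl_normal (vprod s).
Proof.
elim: s => [|x s IHs]; last exact: cl_normalM (cl_normal_vec x) IHs.
by rewrite -[vprod _]scale1r; exact: cl_normal_alg.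
Qed.

Lemma cl_hat_vprod s :
  (forall i, (i < size s)%N -> sub_vector (nth (fun _ => 0) s i)) ->
  cl_hat (vprod s) = vprod s.
Proof.
elim: s => [|x s IHs] s_sub /=; first exact/cl_diag1/hat_sign0.
rewrite cl_hatM cl_hat_vec vhat_sub; last exact: (s_sub 0%N).
by rewrite IHs // => i; exact: (s_sub i.+1).
Qed.

Lemma cl_rev_vprod s : cl_rev (vprod s) = (-1) ^+ size s *: cl_conj (vprod s).
Proof.
elim: s => [|x s IHs] /=.
  by rewrite scale1r cl_diag1 ?rev_sign0 // cl_diag1 ?conj_sign0.
rewrite cl_revM cl_conjM IHs cl_rev_vec cl_conj_vec -scalerAl mulrN scalerN.
by rewrite exprS mulN1r scaleNr opprK.
Qed.

Lemma vahlen_entryP g : is_vprod g \/ g = @clzero R n ->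
  [/\ cl_normal g, cl_hat g = g & exists2 e : R, e != 0 & cl_rev g = e *: cl_conj g].
Proof.
case=> [[s [s_sub ->]]|->].
  split; [exact: cl_normal_vprod | exact: cl_hat_vprod |].
  by exists ((-1) ^+ size s); [rewrite signr_eq0 | exact: cl_rev_vprod].
have -> : @clzero R n = 0%:A :> clifford by rewrite scale0r.
split; [exact: cl_normal_alg | exact/cl_diag_alg/hat_sign0 |].
by exists 1; rewrite ?oner_neq0 // scale1r cl_diag_alg ?rev_sign0 // cl_diag_alg ?conj_sign0.
Qed.

(* p = w v and q = v w = cl_conj p satisfy p + q = s and p q = q p = D for
   real s and D, so after substituting q = s - p both products are scalars. *)
Lemma cl_normal_vec_commutator (v w : 'I_n -> R) (t : R) :
  cl_normal (vec w * vec v - vec v * vec w - t%:A).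
Proof.
set p := vec w * vec v; set q := vec v * vec w.
set s := - 2 * vdot w v; set D := vdot v v * vdot w w.
have pq : p + q = s%:A by rewrite /p /q vec_anticomm.
have pqD : p * q = D%:A.
  rewrite /p /q mulrA -(mulrA (vec w)) vec_sqr mulr_algr -scalerAl vec_sqr.
  by rewrite scalerA mulrNN.
have qpD : q * p = D%:A.
  rewrite /p /q mulrA -(mulrA (vec v)) vec_sqr mulr_algr -scalerAl vec_sqr.
  by rewrite scalerA mulrNN mulrC.
have ppD : p * p = s *: p - D%:A.
  have -> : p * p = p * (s%:A - q) by rewrite -pq addrK.
  by rewrite mulrBr pqD mulr_algr.
have qqD : q * q = s *: q - D%:A.
  have -> : q * q = q * (s%:A - p) by rewrite -pq [p + q]addrC addrK.
  by rewrite mulrBr qpD mulr_algr.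
have conj_M : cl_conj (p - q - t%:A) = q - p - t%:A.
  rewrite !raddfB /= cl_diag_alg ?conj_sign0 // /p /q !cl_conjM !cl_conj_vec.
  by rewrite !mulrNN.
have q_coef C : q C = s * (C == set0)%:R - p C.
  by move/(congr1 (fun u : clifford => u C)): pq; rewrite cl_addE cl_algE => <-; ring.
apply: (cl_normalP (mu := 4%:R * D - s ^+ 2 + t ^+ 2)); rewrite conj_M;
  rewrite !mulrBl !mulrBr pqD qpD ppD qqD !mulr_algl !mulr_algr;
  by apply/funext => C; rewrite !cl_subE !cl_scaleE ?cl_algE !q_coef; ring.
Qed.

End VahlenEntries.

Section HalfSpace.
Variables (R : realType) (n : nat) (i0 : 'I_n).
Hypothesis i0_last : nat_of_ord i0 = n.-1.
Local Notation clifford := (clifford R n).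
Implicit Types (u v : clifford) (x y z : 'I_n -> R).

Lemma vhat_last z : vhat z i0 = - z i0.
Proof. by rewrite /vhat i0_last eqxx. Qed.

Lemma hratioE u v :
  hratio u v = Num.sqrt (cl_norm2 (u - v)) / Num.sqrt (cl_norm2 (u - cl_hat v)).
Proof. by []. Qed.

(* Under these conditions the distortion factors of [psi] cancel in [hratio]. *)
Definition hat_conformal (psi : ('I_n -> R) -> clifford) :=
  exists (K : R) (rho : ('I_n -> R) -> R), [/\ 0 < K,
    forall z, z i0 != 0 ->
      [/\ cl_hat (psi z) = psi (vhat z), 0 < rho z & rho (vhat z) = rho z] &
    forall z1 z2, z1 i0 != 0 -> z2 i0 != 0 ->
      cl_norm2 (psi z1 - psi z2) = K * rho z1 * rho z2 * cl_norm2 (vec z1 - vec z2)].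

Lemma hratio_hat_conformal psi x y : hat_conformal psi -> x i0 != 0 -> y i0 != 0 ->
  hratio (psi x) (psi y) = hratio (vec x) (vec y).
Proof.
case=> K [rho [K_gt0 rhoP dist]] x0 y0; have [_ rhox_gt0 _] := rhoP x x0.
have [hat_y rhoy_gt0 rho_hat_y] := rhoP y y0.
have hat_y0 : vhat y i0 != 0 by rewrite vhat_last oppr_eq0.
rewrite !hratioE hat_y cl_hat_vec !dist // rho_hat_y sqrt_mul_ratio //.
by rewrite !mulr_gt0.
Qed.

End HalfSpace.

Lemma mobiusE (R : realType) n (a b c d : clifford R n) z :
  mobius a b c d z = (a * vec z + b) * clinv (c * vec z + d) :> clifford R n.
Proof. by []. Qed.

Section AffineCase.
Variables (R : realType) (n : nat) (i0 : 'I_n).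
Local Notation clifford := (clifford R n).
Variables (a b c d : clifford) (eps : R).
Hypotheses (a_normal : cl_normal a) (d_normal : cl_normal d).
Hypotheses (a_hat : cl_hat a = a) (b_hat : cl_hat b = b) (d_hat : cl_hat d = d).
Hypotheses (c0 : c = 0) (ad : cl_rev a * d = eps%:A) (eps_neq0 : eps != 0).

Lemma affine_neq0 : a != 0 /\ d != 0.
Proof.
by split; apply: contra_neq eps_neq0 => u0; apply/eqP;
  rewrite -(@cl_alg_eq0 R n) -ad u0 ?linear0 ?mul0r ?mulr0.
Qed.

Lemma affine_mobius z : mobius a b c d z = (a * vec z + b) * cl_ninv d.
Proof. by rewrite mobiusE c0 mul0r add0r clinv_normal //; case: affine_neq0. Qed.

Lemma affine_hat_conformal : hat_conformal i0 (mobius a b c d).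
Proof.
have [a_neq0 d_neq0] := affine_neq0.
exists (cl_norm2 a / cl_norm2 d), (fun _ => 1); split.
- by rewrite divr_gt0 ?cl_norm2_gt0.
- move=> z _; split=> //; rewrite !affine_mobius cl_hatM raddfD /= cl_hatM.
  by rewrite a_hat b_hat cl_hat_vec cl_hat_ninv d_hat.
- move=> z1 z2 _ _; rewrite !affine_mobius -mulrBl opprD addrACA subrr addr0.
  rewrite -mulrBr cl_norm2Mr; last exact: cl_normal_ninv.
  by rewrite cl_norm2Ml // cl_norm2_ninv !mulr1 mulrAC.
Qed.

End AffineCase.

Section PoleCase.
Variables (R : realType) (n : nat) (i0 : 'I_n).
Hypothesis i0_last : nat_of_ord i0 = n.-1.
Local Notation clifford := (clifford R n).
Variables (a b c d : clifford) (e eps : R) (v w : 'I_n -> R).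
Hypotheses (c_normal : cl_normal c) (c_hat : cl_hat c = c) (c_neq0 : c != 0).
Hypotheses (c_rev : cl_rev c = e *: cl_conj c) (e_neq0 : e != 0).
Hypotheses (v_sub : sub_vector v) (w_sub : sub_vector w).
Hypotheses (ac : cl_rev a * c = vec v) (cd : cl_rev c * d = vec w).
Hypotheses (det : cl_rev a * d - cl_rev b * c = eps%:A) (eps_neq0 : eps != 0).

Let k := (e * cl_norm2 c)^-1.

Lemma pole_k_neq0 : k != 0.
Proof. by rewrite invr_eq0 mulf_neq0 // cl_norm2_eq0. Qed.

Lemma pole_mul_rev : c * cl_rev c = k^-1%:A.
Proof. by rewrite invrK c_rev -scalerAr c_normal.1 scalerA. Qed.

Lemma pole_rev_mul : cl_rev c * c = k^-1%:A.
Proof. by rewrite invrK c_rev -scalerAl c_normal.2 scalerA. Qed.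

Lemma pole_a : a = k *: (c * vec v).
Proof.
have ca : cl_rev c * a = vec v by rewrite -[a]cl_revK -cl_revM ac cl_rev_vec.
by rewrite -ca mulrA pole_mul_rev mulr_algl scalerA mulfV ?scale1r // pole_k_neq0.
Qed.

Lemma pole_d : d = k *: (c * vec w).
Proof.
by rewrite -cd mulrA pole_mul_rev mulr_algl scalerA mulfV ?scale1r // pole_k_neq0.
Qed.

Lemma pole_b : b = k *: (c * (k *: (vec w * vec v) - eps%:A)).
Proof.
have k_neq0 := pole_k_neq0.
have bc : cl_rev b * c = cl_rev a * d - eps%:A by rewrite -det opprB addrC addrNK.
have rev_b : cl_rev b = k *: ((cl_rev a * d - eps%:A) * cl_rev c).
  by rewrite -bc -mulrA pole_mul_rev mulr_algr scalerA mulfV ?scale1r.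
have da : cl_rev d * a = k *: (vec w * vec v).
  rewrite {1}pole_d pole_a linearZ /= cl_revM cl_rev_vec -scalerAl -scalerAr scalerA.
  rewrite -mulrA (mulrA (cl_rev c)) pole_rev_mul mulr_algl -scalerAr scalerA.
  by rewrite -mulrA mulfV ?mulr1.
rewrite -[b]cl_revK rev_b linearZ /= cl_revM cl_revK raddfB /= cl_revM cl_revK da.
by rewrite cl_diag_alg ?rev_sign0.
Qed.

Let w' := k *: w.
Let M := vec w' * vec v - vec v * vec w' - eps%:A.
Let Z z := vec (z + w').

Lemma pole_Z_neq0 z : z i0 != 0 -> Z z != 0.
Proof.
move=> z0; apply: (vec_neq0 (i := i0)).
by rewrite /w' !fctE w_sub // scaler0 addr0.
Qed.

Lemma pole_mobius z : z i0 != 0 ->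
  mobius a b c d z = k *: (c * (vec v + M * cl_ninv (Z z)) * cl_ninv c).
Proof.
move=> z0; have Z_normal := cl_normal_vec (z + w'); have Z_neq0 := pole_Z_neq0 z0.
have den : c * vec z + d = c * Z z.
  by rewrite /Z /w' raddfD /= vecZ pole_d mulrDr scalerAr.
have inv : clinv (c * Z z) = cl_ninv (Z z) * cl_ninv c.
  apply: clinv_eq.
    by rewrite mulrA -(mulrA c) cl_mulrV_normal // mulr1 cl_mulrV_normal.
  by rewrite mulrA -(mulrA (cl_ninv (Z z))) cl_mulVr_normal // mulr1 cl_mulVr_normal.
have num : a * vec z + b = k *: (c * (vec v * Z z + M)).
  rewrite pole_a pole_b -scalerAl -mulrA -scalerDr -mulrDr; congr (k *: (c * _)).
  rewrite /M /Z /w' raddfD /= vecZ mulrDr -!scalerAl -!scalerAr.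
  by apply/funext => C; rewrite !(cl_addE, cl_subE, cl_oppE, cl_scaleE); ring.
rewrite mobiusE den inv num -scalerAl mulrA; congr (_ *: (_ * cl_ninv c)).
by rewrite -mulrA mulrDl -mulrA cl_mulrV_normal // mulr1.
Qed.

Lemma pole_hat_conformal : hat_conformal i0 (mobius a b c d).
Proof.
have k_neq0 := pole_k_neq0.
have w'_sub : sub_vector w' by move=> i /w_sub w0; rewrite /w' !fctE w0 scaler0.
have M_normal : cl_normal M by apply: cl_normal_vec_commutator.
have M_neq0 : M != 0.
  apply: contra_neq eps_neq0 => /(congr1 (fun u : clifford => u set0)).
  rewrite /M !cl_subE (cl_scalarC (vec w')) subrr cl_algE eqxx mulr1 sub0r.
  by move/eqP; rewrite oppr_eq0 => /eqP.
have M_hat : cl_hat M = M.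
  rewrite /M !raddfB /= !cl_hatM !cl_hat_vec !vhat_sub //.
  by rewrite cl_diag_alg ?hat_sign0.
have Z_hat z : cl_hat (Z z) = Z (vhat z) by rewrite /Z cl_hat_vec vhatD_sub.
have Z_normal z : cl_normal (Z z) by exact: cl_normal_vec.
exists (k ^+ 2 * cl_norm2 M), (fun z => (cl_norm2 (Z z))^-1); split.
- by rewrite mulr_gt0 ?exprn_even_gt0 ?cl_norm2_gt0.
- move=> z z0; have hz0 : vhat z i0 != 0 by rewrite vhat_last ?oppr_eq0.
  split.
  + rewrite !pole_mobius // linearZ /= !cl_hatM raddfD /= cl_hatM !cl_hat_ninv.
    by rewrite c_hat M_hat Z_hat cl_hat_vec vhat_sub.
  + by rewrite invr_gt0 cl_norm2_gt0 // pole_Z_neq0.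
  + by rewrite -Z_hat cl_norm2_diag //; exact: hat_sign_sqr.
- move=> z1 z2 z1_0 z2_0.
  have ninvB : cl_ninv (Z z1) - cl_ninv (Z z2) =
      cl_ninv (Z z1) * (vec z2 - vec z1) * cl_ninv (Z z2).
    have -> : vec z2 - vec z1 = Z z2 - Z z1.
      by rewrite /Z !raddfD /= addrACA subrr addr0.
    rewrite mulrBr mulrBl -mulrA cl_mulrV_normal ?pole_Z_neq0 // mulr1.
    by rewrite cl_mulVr_normal ?pole_Z_neq0 // mul1r.
  rewrite !pole_mobius // -scalerBr -mulrBl -mulrBr opprD addrACA subrr add0r.
  rewrite -mulrBr ninvB cl_norm2Z (cl_norm2Mr _ (cl_normal_ninv c_normal)).
  rewrite (cl_norm2Ml _ c_normal) (cl_norm2Ml _ M_normal).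
  rewrite (cl_norm2Mr _ (cl_normal_ninv (Z_normal z2))).
  rewrite (cl_norm2Ml _ (cl_normal_ninv (Z_normal z1))).
  rewrite !cl_norm2_ninv -opprB cl_norm2N.
  by rewrite [cl_norm2 c * _]mulrC mulfK ?cl_norm2_eq0 //; ring.
Qed.

End PoleCase.

Section UpperHalfSpace.
Variables (R : realType) (n : nat) (i0 : 'I_n).
Hypothesis i0_last : nat_of_ord i0 = n.-1.
Implicit Types x y : 'I_n -> R.

Lemma in_uhs_neq0 x : in_uhs x -> x i0 != 0.
Proof. by move=> x_uhs; rewrite gt_eqF ?x_uhs. Qed.

Lemma clnorm_sub_hat_neq0 x y : in_uhs x -> in_uhs y ->
  clnorm (clsub (clvec x) (clhat (clvec y))) != 0.
Proof.
move=> x_uhs y_uhs.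
have -> : clsub (clvec x) (clhat (clvec y)) = vec (x - vhat y) :> clifford R n.
  by rewrite raddfB /= -cl_hat_vec.
rewrite /clnorm sqrtr_eq0 -ltNge cl_norm2_gt0 // (vec_neq0 (i := i0)) //.
by rewrite !fctE vhat_last // opprK gt_eqF ?addr_gt0 ?x_uhs ?y_uhs.
Qed.

Lemma vahlen_hat_conformal (a b c d : Cl R n) :
  vahlen a b c d -> hat_conformal i0 (mobius a b c d).
Proof.
case=> /vahlen_entryP [a_normal a_hat _] /vahlen_entryP [_ b_hat _].
move=> /vahlen_entryP [c_normal c_hat [e e_neq0 c_rev]].
move=> /vahlen_entryP [d_normal d_hat _] [[v [v_sub ac]] [w [w_sub cd]] _ _ det].
have [eps eps_neq0 {}det] : exists2 eps : R, eps != 0 &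
    cl_rev a * d - cl_rev b * c = eps%:A :> clifford R n.
  case: det => det; [exists 1; rewrite ?oner_neq0 // scale1r |
    exists (-1); rewrite ?oppr_eq0 ?oner_neq0 // scaleN1r]; exact: det.
have [c0|c_neq0] := eqVneq (c : clifford R n) 0.
  apply: (affine_hat_conformal i0 a_normal d_normal a_hat b_hat d_hat c0 _ eps_neq0).
  by rewrite -det c0 mulr0 subr0.
exact: (pole_hat_conformal i0_last c_normal c_hat c_neq0 c_rev e_neq0 v_sub w_sub
  ac cd det eps_neq0).
Qed.

End UpperHalfSpace.

Theorem proposition2 (R : realType) (n : nat) (f : R -> Cl R n)
  (a b c d : Cl R n) :
  (2 < n)%N ->
  (forall r : R, 0 <= r -> in_Cl_sub (f r)) ->
  (forall A : {set 'I_n},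
     (@lebesgue_measure R).-integrable `[0, +oo[%classic (fun r => (f r A)%:E)) ->
  vahlen a b c d ->
  (forall x y : 'I_n -> R, in_uhs x -> in_uhs y ->
     clnorm (clsub (clvec x) (clhat (clvec y))) != 0 /\
     (forall A : {set 'I_n},
        (@lebesgue_measure R).-integrable `[0, hratio (clvec x) (clvec y)]%classic
          (fun r => (f r A)%:E))) /\
  (forall x y : 'I_n -> R, in_uhs x -> in_uhs y ->
     Fint f (mobius a b c d x) (mobius a b c d y) = Fint f (clvec x) (clvec y)).
Proof.
move=> n_gt2 _ f_int vahlen_abcd.
have last_lt_n : (n.-1 < n)%N by move: n_gt2; case: (n).
pose i0 := Ordinal last_lt_n; have i0_last : nat_of_ord i0 = n.-1 by [].
split=> [x y x_uhs y_uhs|x y x_uhs y_uhs].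
  split=> [|A]; first exact: (clnorm_sub_hat_neq0 i0_last).
  apply: integrableS (f_int A) => // r /=.
  by rewrite !in_itv /= => /andP [->].
have psi_conformal := vahlen_hat_conformal i0_last vahlen_abcd.
apply/funext => A.
by rewrite /Fint (hratio_hat_conformal i0_last psi_conformal) ?in_uhs_neq0.
Qed.
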